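(* Let $G=(V,E)$ and $H=(U,F)$ be finite simple graphs, each with $n$ vertices. Then the uniqueness tree algorithm (tree generation stage followed by tree comparison stage, as described in the context) applied to $G$ and $H$ runs in time $O(n^7)$ in the worst case.
   Context: A simple graph is a finite, unweighted, undirected graph with no loops or multiple edges; the size $n$ of a graph is its number of vertices. The uniqueness tree algorithm, applied to two graphs $G=(V,E)$ and $H=(U,F)$ of size $n$, consists of two stages. Tree generation stage: for each graph and each vertex $v$ of it, build a rooted tree $T(v)$ whose nodes are labelled by vertices of the graph, level by level. Level $0$ consists of the root, labelled $v$. Given the current level, a node of that level is called unique if its label occurs exactly once among the labels of the nodes of that level. Each non-unique node becomes a leaf (no children); each unique node labelled $u$ receives one child for each neighbour $w$ of $u$ in the graph, labelled $w$; these children form the next level. This is repeated while some node on the current level is unique and the height of $T(v)$ is less than $n$. Tree comparison stage: initially no vertex is mapped. For each unmapped $v\in V$ and, in turn, each unmapped $u\in U$, declare $v$ and $u$ equivalent unless one of the following holds: the heights of $T(v)$ and $T(u)$ differ; for some level, the numbers of nodes on that level of $T(v)$ and $T(u)$ differ; for some level and some $i\in\{1,\dots,n-1\}$, the number of nodes on that level having exactly $i$ children differs between $T(v)$ and $T(u)$. If $v$ and $u$ are equivalent, mark both as mapped (map $v$ onto $u$). At the end, output ''$G\cong H$'' if all vertices of $V$ and $U$ have been mapped, and ''$G\not\cong H$'' otherwise. *)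

From mathcomp Require Import all_boot.
Set Implicit Arguments. Unset Strict Implicit. Unset Printing Implicit Defensive.

Definition simple_graph (n : nat) (e : rel 'I_n) : Prop :=
  irreflexive e /\ symmetric e.

(* Neighbours of u, found by scanning the adjacency row (cost n). *)
Definition nbrs (n : nat) (e : rel 'I_n) (u : 'I_n) : seq 'I_n :=
  [seq w <- enum 'I_n | e u w].

(* A node of a level is unique iff its label occurs exactly once on the level
   (checked by scanning the level: cost = size of the level). *)
Definition is_unique (n : nat) (L : seq 'I_n) (x : 'I_n) : bool :=
  count_mem x L == 1.

(* A tree is stored level by level; a node is (label, number of children). *)
Definition level (n : nat) := seq ('I_n * nat).
Definition tree (n : nat) := seq (level n).

(* Tree generation.  [k] is the height of the current level [L].
   Returns the levels from [L] on, together with the number of elementary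
   steps performed (naive implementation: uniqueness test of every node by
   scanning the level, children by scanning the adjacency row). *)
Fixpoint gen_levels (n : nat) (e : rel 'I_n) (fuel k : nat) (L : seq 'I_n)
  : tree n * nat :=
  let uniq_cost := size L * size L in
  let leaves := [seq (x, 0) | x <- L] in
  match fuel with
  | 0 => ([:: leaves], uniq_cost)
  | fuel'.+1 =>
    if (k < n) && has (is_unique L) L then
      let cur := [seq (x, if is_unique L x then size (nbrs e x) else 0) | x <- L] in
      let next := flatten [seq (if is_unique L x then nbrs e x else [::]) | x <- L] in
      let step_cost := uniq_cost + size L * n in
      if next is [::] then ([:: cur], step_cost)
      else let: (rest, c) := gen_levels e fuel' k.+1 next in
           (cur :: rest, step_cost + c)
    else ([:: leaves], uniq_cost)
  end.

(* T(v), with its generation cost.  Fuel n suffices: the height never exceeds n. *)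
Definition uniqueness_tree (n : nat) (e : rel 'I_n) (v : 'I_n) : tree n * nat :=
  gen_levels e n 0 [:: v].

Definition height (n : nat) (T : tree n) : nat := (size T).-1.

Definition nchildren_count (n : nat) (L : level n) (i : nat) : nat :=
  count (fun p : 'I_n * nat => p.2 == i) L.

(* Equivalence test of two trees, with its cost: for every level, its size
   and, for each i in 1..n-1, the number of its nodes with i children are
   computed by scanning the level. *)
Definition tree_equiv (n : nat) (T1 T2 : tree n) : bool * nat :=
  let lv := iota 0 (minn (size T1) (size T2)) in
  let res :=
    (height T1 == height T2) &&
    all (fun j =>
           let L1 := nth [::] T1 j in let L2 := nth [::] T2 j in
           (size L1 == size L2) &&
           all (fun i => nchildren_count L1 i == nchildren_count L2 i)
               (iota 1 n.-1)) lv in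
  let cost := 1 + sumn [seq ((size (nth [::] T1 j) + size (nth [::] T2 j)) * n.+1)
                       | j <- lv] in
  (res, cost).

(* For a fixed v (tree Tv): try in turn each unmapped u; map v onto the first
   equivalent one.  Returns updated "u mapped" flags, whether v got mapped,
   and the cost. *)
Fixpoint try_map (n : nat) (Tv : tree n) (TU : seq (tree n)) (mU : seq bool)
  : seq bool * bool * nat :=
  match TU, mU with
  | Tu :: TU', m :: mU' =>
    if m then
      let: (mU2, f, c) := try_map Tv TU' mU' in (m :: mU2, f, c.+1)
    else
      let: (eqb, c0) := tree_equiv Tv Tu in
      if eqb then (true :: mU', true, c0.+1)
      else let: (mU2, f, c) := try_map Tv TU' mU' in (m :: mU2, f, (c0 + c).+1)
  | _, _ => (mU, false, 0)
  end.

(* Comparison stage: process the v's in order; returns (v mapped flags,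
   u mapped flags, cost). *)
Fixpoint compare_stage (n : nat) (TV TU : seq (tree n)) (mU : seq bool)
  : seq bool * seq bool * nat :=
  match TV with
  | [::] => ([::], mU, 0)
  | Tv :: TV' =>
    let: (mU1, f, c1) := try_map Tv TU mU in
    let: (mV, mU2, c2) := compare_stage TV' TU mU1 in
    (f :: mV, mU2, c1 + c2)
  end.

(* The whole algorithm: returns (answer "G ≅ H", total number of steps). *)
Definition uta_run (n : nat) (eG eH : rel 'I_n) : bool * nat :=
  let gG := [seq uniqueness_tree eG v | v <- enum 'I_n] in
  let gH := [seq uniqueness_tree eH u | u <- enum 'I_n] in
  let gen_cost := sumn (map snd gG) + sumn (map snd gH) in
  let: (mV, mU, ccost) := compare_stage (map fst gG) (map fst gH) (nseq n false) in
  (all id mV && all id mU, gen_cost + ccost + (size mV + size mU)).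

From mathcomp Require Import all_boot zify.

Set Implicit Arguments.
Unset Strict Implicit.
Unset Printing Implicit Defensive.

(* Every level of a uniqueness tree has at most n^2 nodes: at most n nodes of a
   level are unique (they carry distinct labels), and each has at most n
   children.  Hence a tree has at most n+1 levels of size n^2, generating it
   costs O(n^5) (the quadratic uniqueness scan of each level dominates), and
   comparing two trees costs O(n^4).  The n^2 comparisons and the 2n
   generations give O(n^6) steps, well within O(n^7).  Nothing about the
   adjacency relation is used, so the bound holds for arbitrary relations. *)

Lemma sumn_map_le (T : Type) (f : T -> nat) (s : seq T) b :
  (forall x, f x <= b) -> sumn (map f s) <= size s * b.
Proof. by move=> f_le; elim: s => //= x s IHs; rewrite mulSn leq_add. Qed.

Definition small_tree {n : nat} (T : tree n) : bool :=
  (size T <= n.+1) && all (fun l : level n => size l <= n * n) T.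

Section Generation.
Variables (n : nat) (e : rel 'I_n).

Lemma size_nbrs u : size (nbrs e u) <= n.
Proof. by rewrite size_filter (leq_trans (count_size _ _)) // size_enum_ord. Qed.

Lemma uniq_filter_is_unique (L : seq 'I_n) : uniq [seq x <- L | is_unique L x].
Proof.
apply: count_mem_uniq => x; rewrite count_filter mem_filter.
case ux: (is_unique L x) => /=.
  have -> : count (predI (pred1 x) (is_unique L)) L = count_mem x L.
    by apply: eq_count => y /=; case: eqP => // ->; rewrite ux.
  by move/eqP: ux => ux; rewrite ux -has_pred1 has_count ux.
apply/eqP; rewrite eqn0Ngt -has_count; apply/hasP => -[y _ /= /andP[/eqP-> uy]].
by rewrite ux in uy.
Qed.

Lemma count_is_unique_le (L : seq 'I_n) : count (is_unique L) L <= n.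
Proof.
rewrite -size_filter (leq_trans _ (eq_leq (size_enum_ord n))) //.
by apply: uniq_leq_size (uniq_filter_is_unique L) _ => x _; rewrite mem_enum.
Qed.

Lemma sumn_size_children (p : pred 'I_n) (s : seq 'I_n) :
  sumn [seq size (if p x then nbrs e x else [::]) | x <- s] <= count p s * n.
Proof.
elim: s => //= x s IHs; rewrite mulnDl leq_add //.
by case: (p x); rewrite ?mul1n ?size_nbrs.
Qed.

Lemma gen_levels_bound fuel k (L : seq 'I_n) : size L <= n * n ->
  [/\ (gen_levels e fuel k L).2 <= fuel.+1 * (n * n * (n * n) + n * n * n),
      size (gen_levels e fuel k L).1 <= fuel.+1 &
      all (fun l : level n => size l <= n * n) (gen_levels e fuel k L).1].
Proof.
elim: fuel k L => [|fuel IHfuel] k L sizeL /=.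
  by rewrite size_map sizeL; split => //; nia.
case: ifP => _; last by rewrite /= size_map sizeL; split => //; nia.
set next := flatten _.
have size_next : size next <= n * n.
  rewrite size_flatten /shape -map_comp.
  apply: leq_trans (sumn_size_children (is_unique L) L) _.
  by rewrite leq_mul2r count_is_unique_le orbT.
case: next size_next => [|x next] size_next /=.
  by rewrite size_map sizeL; split => //; nia.
case: (IHfuel k.+1 _ size_next); case: gen_levels => T c /= costT sizeT levelsT.
by rewrite size_map sizeL levelsT; split => //; nia.
Qed.

Lemma uniqueness_tree_bound v :
  small_tree (uniqueness_tree e v).1 /\
  (uniqueness_tree e v).2 <= n.+1 * (n * n * (n * n) + n * n * n).
Proof.
have [] := @gen_levels_bound n 0 [:: v]; first by case: n v => [[]|].
by rewrite /uniqueness_tree /small_tree => -> -> ->.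
Qed.

Lemma generation_cost :
  sumn (map snd [seq uniqueness_tree e v | v <- enum 'I_n])
    <= n * (n.+1 * (n * n * (n * n) + n * n * n)).
Proof.
rewrite -map_comp -[X in X * _]size_enum_ord sumn_map_le // => v /=.
by case: (uniqueness_tree_bound v).
Qed.

Lemma generated_trees_small :
  all small_tree (map fst [seq uniqueness_tree e v | v <- enum 'I_n]).
Proof.
by rewrite -map_comp; apply/allP => _ /mapP[v _ ->]; case: (uniqueness_tree_bound v).
Qed.

End Generation.

Section Comparison.
Variable n : nat.

Definition equiv_cost_bound : nat := 1 + n.+1 * ((n * n + n * n) * n.+1).

Lemma size_nth_level (T : tree n) j :
  all (fun l : level n => size l <= n * n) T -> size (nth [::] T j) <= n * n.
Proof.
move=> /allP levelsT; case: (ltnP j (size T)) => [/(mem_nth [::])/levelsT // | large].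
by rewrite nth_default.
Qed.

Lemma tree_equiv_cost (T1 T2 : tree n) :
  small_tree T1 -> small_tree T2 -> (tree_equiv T1 T2).2 <= equiv_cost_bound.
Proof.
move=> /andP[size1 levels1] /andP[size2 levels2]; rewrite leq_add2l.
apply: leq_trans (sumn_map_le (b := (n * n + n * n) * n.+1) _ _) _ => [j|].
  by rewrite leq_mul2r leq_add ?size_nth_level ?orbT.
by rewrite leq_mul2r size_iota geq_min size1 orbT.
Qed.

Lemma try_map_bound (Tv : tree n) TU mU : small_tree Tv -> all small_tree TU ->
  (try_map Tv TU mU).2 <= size TU * equiv_cost_bound.+1 /\
  size (try_map Tv TU mU).1.1 = size mU.
Proof.
move=> smallTv; elim: TU mU => [|Tu TU IHTU] [|m mU] //= /andP[smallTu smallTU].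
have := tree_equiv_cost smallTv smallTu; rewrite /tree_equiv /=.
set c0 := 1 + sumn _.
case: (IHTU mU smallTU); case: try_map => -[mU' f] c /= cost_c size_mU' cost_c0.
rewrite mulSn; case: m => /=; first by rewrite size_mU' -add1n leq_add.
case: ifP => _ /=; split; rewrite ?size_mU' -?addSn ?ltnS ?leq_add //.
exact: leq_trans cost_c0 (leq_addr _ _).
Qed.

Lemma compare_stage_bound (TV TU : seq (tree n)) mU :
  all small_tree TV -> all small_tree TU ->
  [/\ (compare_stage TV TU mU).2 <= size TV * (size TU * equiv_cost_bound.+1),
      size (compare_stage TV TU mU).1.1 = size TV &
      size (compare_stage TV TU mU).1.2 = size mU].
Proof.
move=> + smallTU; elim: TV mU => [|Tv TV IHTV] mU //= /andP[smallTv smallTV].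
case: (try_map_bound mU smallTv smallTU); case: try_map => -[mU1 f] c1 /= cost1 size1.
case: (IHTV mU1 smallTV); case: compare_stage => -[mV mU2] c2 /= cost2 sizeV sizeU.
by rewrite sizeV sizeU size1 mulSn; split => //; apply: leq_add.
Qed.

End Comparison.

Theorem theorem1 :
  exists C n0 : nat, forall n : nat, n0 <= n ->
    forall eG eH : rel 'I_n, simple_graph eG -> simple_graph eH ->
      (uta_run eG eH).2 <= C * n ^ 7.
Proof.
exists 20, 1 => n n_gt0 eG eH _ _.
have genG := generation_cost eG; have genH := generation_cost eH.
have [smallG smallH] := (generated_trees_small eG, generated_trees_small eH).
case: (compare_stage_bound (nseq n false) smallG smallH).
rewrite /uta_run; case: compare_stage => -[mV mU] cost /=.
rewrite !size_map size_nseq -enumT size_enum_ord /equiv_cost_bound => costC -> ->.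
have -> : n ^ 7 = n * n * n * n * n * n * n by rewrite !expnS expn0 muln1 !mulnA.
nia.
Qed.
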